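(* If some set maximizing $\widehat{sw}$ over nonempty subsets of $\mathbb{S}$ has cardinality $k$, then $\{1,2,\dots,k\}$ also maximizes $\widehat{sw}$ over nonempty subsets of $\mathbb{S}$.
   Context: Sellers $\mathbb{S}=\{1,\dots,n\}$ with product qualities $\theta_1\ge\theta_2\ge\dots\ge\theta_n\ge0$. Let $W$ be the Lambert W function on $[0,\infty)$ ($W(x)e^{W(x)}=x$) and $w_i=W(e^{\theta_i-1})$, so $w_1\ge\dots\ge w_n>0$. For nonempty $S\subseteq\mathbb{S}$, the Cournot-equilibrium social welfare when $S$ is displayed is $\widehat{sw}(S)=\log(1+\sum_{i\in S}w_i)+\frac{\sum_{i\in S}(w_i^2+w_i)}{1+\sum_{i\in S}w_i}$. *)

From Stdlib Require Import Reals List Arith ClassicalEpsilon.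
Open Scope R_scope.

(* Lambert W on [0,oo): the unique y >= 0 with y * e^y = x (exists and is
   unique for x >= 0; chosen by Hilbert epsilon). *)
Definition LambertW (x : R) : R :=
  epsilon (inhabits 0%R) (fun y => 0 <= y /\ y * exp y = x).

Definition wq (theta : nat -> R) (i : nat) : R := LambertW (exp (theta i - 1)).

(* Subsets of {1,...,n} are boolean predicates on nat, restricted to 1..n. *)
Definition members (n : nat) (S : nat -> bool) : list nat :=
  filter S (seq 1 n).

Definition sumS (n : nat) (S : nat -> bool) (f : nat -> R) : R :=
  fold_right Rplus 0 (map f (members n S)).

Definition card (n : nat) (S : nat -> bool) : nat := length (members n S).

Definition nonemptyS (n : nat) (S : nat -> bool) : Prop :=
  exists i, (1 <= i <= n)%nat /\ S i = true.

(* Cournot-equilibrium social welfare of displayed set S *)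
Definition sw_hat (theta : nat -> R) (n : nat) (S : nat -> bool) : R :=
  let W := sumS n S (wq theta) in
  ln (1 + W) + sumS n S (fun i => wq theta i ^ 2 + wq theta i) / (1 + W).

Definition is_maximizer (theta : nat -> R) (n : nat) (S : nat -> bool) : Prop :=
  nonemptyS n S /\
  forall T : nat -> bool, nonemptyS n T -> sw_hat theta n T <= sw_hat theta n S.

Definition prefix (k : nat) : nat -> bool := fun i => Nat.leb i k.

From Stdlib Require Import Reals List Arith.
From Stdlib Require Import Lra Lia Psatz Permutation ClassicalEpsilon Classical.
Open Scope R_scope.

(* The argument is an exchange argument.  Let T be a maximizer of sw_hat with
   |T| = k that is not {1,...,k}.  Then T contains some j > k and misses some
   i <= k.  Write T = T' + {j} and consider T' + {i}.  Both values have the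
   form welfare(W + x, C + x^2 + x) with W, C the totals of T', evaluated at
   x = w_j <= w_i.  As a function of u = 1 + W + x this is, up to constants,
   h(u) = ln u + u + D/u, whose derivative (u^2 + u - D)/u^2 changes sign at
   most once, from negative to positive.  Since T is a maximizer, the value
   at x = 0 (the set T', or 0 if T' is empty) is at most the value at w_j, so
   h has already started rising before w_j and keeps rising up to w_i: the
   exchanged set is again a maximizer, of the same cardinality, with one
   element fewer above k.  Induction on that number ends at a maximizer with
   all k elements in {1,...,k}, which is {1,...,k} itself. *)

(* y * e^y takes every positive value at some y >= 0, so LambertW is
   determined by its specification on positive arguments. *)
Lemma lambert_exists (c : R) : 0 < c -> exists y, 0 <= y /\ y * exp y = c.
Proof.
  intro Hc.
  destruct (IVT (fun y => y * exp y - c) 0 c) as [z [Hz Ez]].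
  - intro x. apply continuity_pt_minus; [apply continuity_pt_mult|];
      apply derivable_continuous_pt;
      [apply derivable_pt_id|apply derivable_pt_exp|apply derivable_pt_const].
  - exact Hc.
  - rewrite exp_0. lra.
  - assert (1 < exp c) by (rewrite <- exp_0; apply exp_increasing; lra). nra.
  - exists z. split; lra.
Qed.

Lemma wq_spec (theta : nat -> R) (i : nat) :
  0 < wq theta i /\ wq theta i * exp (wq theta i) = exp (theta i - 1).
Proof.
  unfold wq, LambertW.
  destruct (epsilon_spec (inhabits 0)
              (fun y => 0 <= y /\ y * exp y = exp (theta i - 1))
              (lambert_exists _ (exp_pos _))) as [[Hpos|Hzero] E].
  - split; assumption.
  - rewrite <- Hzero in E. pose proof (exp_pos (theta i - 1)). lra.
Qed.

Lemma xexp_increasing (a b : R) : 0 <= a -> a < b -> a * exp a < b * exp b.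
Proof.
  intros Ha Hab.
  assert (exp a < exp b) by (apply exp_increasing; lra).
  pose proof (exp_pos a). nra.
Qed.

Lemma wq_mono (theta : nat -> R) (i j : nat) :
  theta j <= theta i -> wq theta j <= wq theta i.
Proof.
  intro Hij.
  destruct (wq_spec theta i) as [Hi Ei], (wq_spec theta j) as [Hj Ej].
  destruct (Rle_lt_dec (wq theta j) (wq theta i)) as [|Hlt]; [assumption|].
  exfalso. pose proof (xexp_increasing _ _ (Rlt_le _ _ Hi) Hlt) as H.
  rewrite Ei, Ej in H. apply exp_lt_inv in H. lra.
Qed.

Definition upd (T : nat -> bool) (x : nat) (b : bool) : nat -> bool :=
  fun y => if y =? x then b else T y.

Lemma In_members (n : nat) (T : nat -> bool) (x : nat) :
  In x (members n T) <-> (1 <= x <= n)%nat /\ T x = true.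
Proof.
  unfold members. rewrite filter_In, in_seq.
  split; intros [Hx Tx]; split; auto; lia.
Qed.

Lemma members_ext (n : nat) (T T' : nat -> bool) :
  (forall x, (1 <= x <= n)%nat -> T x = T' x) -> members n T = members n T'.
Proof.
  intro H. apply filter_ext_in. intros x Hx. apply in_seq in Hx. apply H. lia.
Qed.

Lemma filter_pull (l : list nat) (P : nat -> bool) (x : nat) :
  NoDup l -> In x l -> P x = true ->
  Permutation (filter P l) (x :: filter (upd P x false) l).
Proof.
  induction l as [|a l IH]; intros Hnd Hin Px; [destruct Hin|].
  apply NoDup_cons_iff in Hnd as [Ha Hnd]. simpl filter.
  change (upd P x false a) with (if a =? x then false else P a).
  destruct (Nat.eqb_spec a x) as [->|Hax].
  - rewrite Px. apply perm_skip. apply Permutation_refl'.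
    apply filter_ext_in. intros y Hy. unfold upd.
    destruct (Nat.eqb_spec y x) as [->|]; [contradiction|reflexivity].
  - destruct Hin as [->|Hin]; [contradiction|].
    destruct (P a); [|apply IH; auto].
    eapply perm_trans; [apply perm_skip, IH; auto|apply perm_swap].
Qed.

Lemma members_pull (n : nat) (T : nat -> bool) (x : nat) :
  (1 <= x <= n)%nat -> T x = true ->
  Permutation (members n T) (x :: members n (upd T x false)).
Proof.
  intros Hx Tx. apply filter_pull; auto using seq_NoDup.
  apply in_seq. lia.
Qed.

Lemma members_push (n : nat) (T : nat -> bool) (x : nat) :
  (1 <= x <= n)%nat -> T x = false ->
  Permutation (members n (upd T x true)) (x :: members n T).
Proof.
  intros Hx Tx.
  replace (members n T) with (members n (upd (upd T x true) x false)).
  - apply members_pull; [assumption|]. unfold upd. now rewrite Nat.eqb_refl.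
  - apply members_ext. intros y _. unfold upd.
    destruct (Nat.eqb_spec y x) as [->|]; auto.
Qed.

Lemma sum_perm (f : nat -> R) (l l' : list nat) :
  Permutation l l' ->
  fold_right Rplus 0 (map f l) = fold_right Rplus 0 (map f l').
Proof. induction 1; simpl; lra. Qed.

Lemma sumS_pull (n : nat) (T : nat -> bool) (f : nat -> R) (x : nat) :
  (1 <= x <= n)%nat -> T x = true -> sumS n T f = f x + sumS n (upd T x false) f.
Proof. intros Hx Tx. exact (sum_perm f _ _ (members_pull n T x Hx Tx)). Qed.

Lemma sumS_push (n : nat) (T : nat -> bool) (f : nat -> R) (x : nat) :
  (1 <= x <= n)%nat -> T x = false -> sumS n (upd T x true) f = f x + sumS n T f.
Proof. intros Hx Tx. exact (sum_perm f _ _ (members_push n T x Hx Tx)). Qed.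

Lemma card_pull (n : nat) (T : nat -> bool) (x : nat) :
  (1 <= x <= n)%nat -> T x = true -> card n T = S (card n (upd T x false)).
Proof. intros Hx Tx. exact (Permutation_length (members_pull n T x Hx Tx)). Qed.

Lemma card_push (n : nat) (T : nat -> bool) (x : nat) :
  (1 <= x <= n)%nat -> T x = false -> card n (upd T x true) = S (card n T).
Proof. intros Hx Tx. exact (Permutation_length (members_push n T x Hx Tx)). Qed.

Lemma sumS_wq_nonneg (theta : nat -> R) (n : nat) (T : nat -> bool) :
  0 <= sumS n T (wq theta).
Proof.
  unfold sumS. induction (members n T) as [|x l IH]; simpl; [lra|].
  destruct (wq_spec theta x). lra.
Qed.

Definition welfare (W C : R) : R := ln (1 + W) + C / (1 + W).

Lemma sw_hat_welfare (theta : nat -> R) (n : nat) (T : nat -> bool) :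
  sw_hat theta n T =
  welfare (sumS n T (wq theta)) (sumS n T (fun i => wq theta i ^ 2 + wq theta i)).
Proof. reflexivity. Qed.

Lemma nondecreasing_after_rise (f f' : R -> R) (A a b : R) :
  (forall c, A <= c -> derivable_pt_lim f c (f' c)) ->
  (forall c c', A < c' <= c -> f' c < 0 -> f' c' < 0) ->
  A < a <= b -> f A <= f a -> f a <= f b.
Proof.
  intros Hder Hsign [HAa Hab] Hrise.
  destruct (Rle_lt_dec (f a) (f b)) as [|Hfall]; [assumption|exfalso].
  destruct Hab as [Hab|<-]; [|lra].
  destruct (MVT_cor2 f f' a b Hab) as [c [Ec Hc]];
    [intros c Hc; apply Hder; lra|].
  destruct (MVT_cor2 f f' A a HAa) as [c' [Ec' Hc']];
    [intros c0 Hc0; apply Hder; lra|].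
  assert (Hfc : f' c < 0) by nra.
  assert (Hfc' : f' c' < 0) by (apply (Hsign c); [lra|exact Hfc]).
  nra.
Qed.

(* The shape of welfare along the addition of one item, up to constants. *)
Definition h_shape (D u : R) : R := ln u + u + D / u.

(* h_shape' (u) = (u^2 + u - D)/u^2, whose sign changes at most once on u > 0. *)
Lemma h_shape_deriv (D c : R) :
  0 < c -> derivable_pt_lim (h_shape D) c ((c ^ 2 + c - D) / c ^ 2).
Proof.
  intro Hc.
  assert (H := derivable_pt_lim_plus _ _ c _ _
    (derivable_pt_lim_plus _ _ c _ _ (derivable_pt_lim_ln c Hc) (derivable_pt_lim_id c))
    (derivable_pt_lim_div (fct_cte D) id c _ _
       (derivable_pt_lim_const D c) (derivable_pt_lim_id c) ltac:(unfold id; lra))).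
  replace ((c ^ 2 + c - D) / c ^ 2)
    with (/ c + 1 + (0 * id c - 1 * fct_cte D c) / (id c)²)
    by (unfold id, fct_cte, Rsqr; field; lra).
  exact H.
Qed.

Lemma welfare_add_shape (W C x : R) :
  0 <= W -> 0 <= x ->
  welfare (W + x) (C + (x ^ 2 + x)) =
  h_shape (C + (1 + W) ^ 2 - (1 + W)) (1 + W + x) + 1 - 2 * (1 + W).
Proof.
  intros HW Hx. unfold welfare, h_shape.
  replace (1 + (W + x)) with (1 + W + x) by ring.
  field. lra.
Qed.

Lemma welfare_single_crossing (W C a b : R) :
  0 <= W -> 0 < a <= b ->
  welfare W C <= welfare (W + a) (C + (a ^ 2 + a)) ->
  welfare (W + a) (C + (a ^ 2 + a)) <= welfare (W + b) (C + (b ^ 2 + b)).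
Proof.
  intros HW [Ha Hab] Hrise.
  set (D := C + (1 + W) ^ 2 - (1 + W)).
  replace (welfare W C) with (welfare (W + 0) (C + (0 ^ 2 + 0))) in Hrise
    by (f_equal; ring).
  rewrite !welfare_add_shape in * by lra. fold D in Hrise |- *.
  enough (h_shape D (1 + W + a) <= h_shape D (1 + W + b)) by lra.
  apply (nondecreasing_after_rise (h_shape D) (fun c => (c ^ 2 + c - D) / c ^ 2)
           (1 + W + 0)); [| |lra|lra].
  - intros c Hc. apply h_shape_deriv. lra.
  - intros c c' Hc Hneg.
    assert (c ^ 2 + c - D < 0).
    { apply Rmult_lt_reg_r with (/ c ^ 2);
        [apply Rinv_0_lt_compat; nra|]. rewrite Rmult_0_l. exact Hneg. }
    apply Rdiv_neg_pos; nra.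
Qed.

Lemma welfare_single_pos (a : R) :
  0 < a -> welfare 0 0 <= welfare (0 + a) (0 + (a ^ 2 + a)).
Proof.
  intro Ha. unfold welfare.
  replace (1 + 0) with 1 by ring. rewrite ln_1. unfold Rdiv. rewrite Rmult_0_l.
  assert (Hln : ln 1 < ln (1 + (0 + a))) by (apply ln_increasing; lra).
  rewrite ln_1 in Hln.
  assert (0 <= (0 + (a ^ 2 + a)) * / (1 + (0 + a))).
  { apply Rmult_le_pos; [nra|left; apply Rinv_0_lt_compat; lra]. }
  lra.
Qed.

Lemma maximizer_of_better (theta : nat -> R) (n : nat) (T T' : nat -> bool) :
  is_maximizer theta n T -> nonemptyS n T' ->
  sw_hat theta n T <= sw_hat theta n T' -> is_maximizer theta n T'.
Proof.
  intros [_ Hmax] Hne Hle. split; [assumption|].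
  intros U HU. specialize (Hmax U HU). lra.
Qed.

Lemma maximizer_members (theta : nat -> R) (n : nat) (T T' : nat -> bool) :
  members n T = members n T' -> is_maximizer theta n T -> is_maximizer theta n T'.
Proof.
  intros Heq HT. apply (maximizer_of_better theta n T); [assumption| |].
  - destruct HT as [[x Hx] _]. exists x. apply In_members.
    rewrite <- Heq. apply In_members. exact Hx.
  - unfold sw_hat, sumS. rewrite Heq. lra.
Qed.

Lemma exchange_maximizer (theta : nat -> R) (n : nat) (T : nat -> bool) (i j : nat) :
  (1 <= i)%nat -> (i < j <= n)%nat -> theta j <= theta i ->
  T i = false -> T j = true -> is_maximizer theta n T ->
  is_maximizer theta n (upd (upd T j false) i true).
Proof.
  intros Hi Hij Hth Ti Tj HT.
  set (T' := upd T j false).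
  assert (T'i : T' i = false).
  { unfold T', upd. destruct (Nat.eqb_spec i j); [lia|exact Ti]. }
  set (W := sumS n T' (wq theta)).
  set (C := sumS n T' (fun x => wq theta x ^ 2 + wq theta x)).
  assert (ET : sw_hat theta n T =
               welfare (W + wq theta j) (C + (wq theta j ^ 2 + wq theta j))).
  { rewrite sw_hat_welfare, !(sumS_pull n T _ j) by (lia || assumption).
    unfold W, C, T'. f_equal; ring. }
  assert (EX : sw_hat theta n (upd T' i true) =
               welfare (W + wq theta i) (C + (wq theta i ^ 2 + wq theta i))).
  { rewrite sw_hat_welfare, !(sumS_push n T' _ i) by (lia || assumption).
    unfold W, C. f_equal; ring. }
  destruct (wq_spec theta j) as [Hwj _].
  assert (Hrise : welfare W C <= sw_hat theta n T).
  { destruct (members n T') as [|x l] eqn:Hmem.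
    - assert (HW0 : W = 0) by (unfold W, sumS; rewrite Hmem; reflexivity).
      assert (HC0 : C = 0) by (unfold C, sumS; rewrite Hmem; reflexivity).
      rewrite ET, HW0, HC0. apply welfare_single_pos, Hwj.
    - destruct HT as [_ Hmax]. apply Hmax.
      exists x. apply In_members. rewrite Hmem. left. reflexivity. }
  apply (maximizer_of_better theta n T); [assumption| |].
  - exists i. split; [lia|]. unfold upd. now rewrite Nat.eqb_refl.
  - rewrite ET, EX. rewrite ET in Hrise.
    apply welfare_single_crossing; [apply sumS_wq_nonneg| |exact Hrise].
    split; [exact Hwj|apply wq_mono, Hth].
Qed.

Lemma card_exchange (n : nat) (T : nat -> bool) (i j : nat) :
  (1 <= i)%nat -> (i < j <= n)%nat -> T i = false -> T j = true ->
  card n (upd (upd T j false) i true) = card n T.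
Proof.
  intros Hi Hij Ti Tj.
  rewrite card_push, (card_pull n T j); [reflexivity|lia|assumption|lia|].
  unfold upd. destruct (Nat.eqb_spec i j); [lia|exact Ti].
Qed.

Lemma card_lt (n : nat) (P Q : nat -> bool) (x : nat) :
  (forall y, (1 <= y <= n)%nat -> P y = true -> Q y = true) ->
  (1 <= x <= n)%nat -> Q x = true -> P x = false ->
  (card n P < card n Q)%nat.
Proof.
  intros Hsub Hx Qx Px. unfold card.
  assert (Hincl : incl (members n P) (members n Q)).
  { intros y Hy. apply In_members in Hy as [Hy Py]. apply In_members. auto. }
  destruct (Nat.lt_ge_cases (length (members n P)) (length (members n Q)))
    as [|Hge]; [assumption|exfalso].
  assert (HxP : In x (members n P)).
  { apply (NoDup_length_incl (NoDup_filter _ (seq_NoDup n 1)) Hge Hincl).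
    apply In_members. auto. }
  apply In_members in HxP as [_ HPx]. congruence.
Qed.

Lemma card_prefix (n k : nat) : card n (prefix k) = Nat.min n k.
Proof.
  induction n as [|n IH]; [reflexivity|].
  unfold card, members in *. rewrite seq_S, filter_app, length_app, IH.
  cbn [filter]. unfold prefix at 1.
  destruct (Nat.leb_spec (1 + n) k); cbn [length]; lia.
Qed.

Lemma missing_below (n : nat) (T : nat -> bool) (k j : nat) :
  card n T = k -> (1 <= j <= n)%nat -> T j = true -> (k < j)%nat ->
  exists i, (1 <= i <= k)%nat /\ T i = false.
Proof.
  intros Hc Hj Tj Hkj. apply NNPP. intro Hnone.
  assert (Hlt : (card n (prefix k) < card n T)%nat).
  { apply (card_lt n (prefix k) T j); auto.
    - intros y Hy Py. destruct (T y) eqn:Ty; [reflexivity|].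
      exfalso. apply Hnone. exists y. apply Nat.leb_le in Py. split; [lia|exact Ty].
    - unfold prefix. apply Nat.leb_gt. exact Hkj. }
  rewrite card_prefix in Hlt. lia.
Qed.

Definition above (k : nat) (T : nat -> bool) : nat -> bool :=
  fun x => (T x && (k <? x))%bool.

Lemma prefix_of_none_above (n : nat) (T : nat -> bool) (k : nat) :
  card n (above k T) = 0%nat -> card n T = k ->
  forall x, (1 <= x <= n)%nat -> T x = prefix k x.
Proof.
  intros Habove Hc.
  assert (Hsub : forall y, (1 <= y <= n)%nat -> T y = true -> prefix k y = true).
  { intros y Hy Ty. unfold prefix. apply Nat.leb_le.
    destruct (Nat.leb_spec y k) as [|Hky]; [assumption|exfalso].
    unfold card in Habove. apply length_zero_iff_nil in Habove.
    assert (Hin : In y (members n (above k T))).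
    { apply In_members. split; [exact Hy|]. unfold above.
      rewrite Ty. apply Nat.ltb_lt. exact Hky. }
    rewrite Habove in Hin. destruct Hin. }
  intros x Hx. destruct (T x) eqn:Tx; [symmetry; auto|].
  destruct (prefix k x) eqn:Px; [exfalso|reflexivity].
  pose proof (card_lt n T (prefix k) x Hsub Hx Px Tx) as Hlt.
  rewrite card_prefix in Hlt. lia.
Qed.

Lemma above_exchange (n : nat) (T : nat -> bool) (k i j : nat) :
  (1 <= i <= k)%nat -> (k < j <= n)%nat -> T j = true ->
  card n (above k T) = S (card n (above k (upd (upd T j false) i true))).
Proof.
  intros Hi Hj Tj.
  rewrite (card_pull n (above k T) j) by
    (lia || (unfold above; rewrite Tj; apply Nat.ltb_lt; lia)).
  f_equal. unfold card. f_equal. apply members_ext. intros y _.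
  unfold above, upd.
  destruct (Nat.eqb_spec y j) as [Hyj|Hyj], (Nat.eqb_spec y i) as [Hyi|Hyi];
    try lia; try reflexivity.
  replace (k <? y) with false by (symmetry; apply Nat.ltb_ge; lia).
  now rewrite Bool.andb_false_r.
Qed.

Lemma prefix_maximizer_by_above (theta : nat -> R) (n k : nat) :
  (forall i j, (1 <= i)%nat -> (i <= j)%nat -> (j <= n)%nat -> theta j <= theta i) ->
  forall m T, card n (above k T) = m -> is_maximizer theta n T -> card n T = k ->
  is_maximizer theta n (prefix k).
Proof.
  intros Hsorted m. induction m as [|m IH]; intros T Hm HT Hc.
  - apply (maximizer_members theta n T); [|assumption].
    apply members_ext, prefix_of_none_above; assumption.
  - destruct (members n (above k T)) as [|j l] eqn:Hmem;
      [unfold card in Hm; rewrite Hmem in Hm; discriminate|].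
    assert (Hj : In j (members n (above k T))) by (rewrite Hmem; left; reflexivity).
    apply In_members in Hj as [Hj Hab].
    apply andb_prop in Hab as [Tj Hkj]. apply Nat.ltb_lt in Hkj.
    destruct (missing_below n T k j Hc Hj Tj Hkj) as [i [Hi Ti]].
    apply (IH (upd (upd T j false) i true)).
    + pose proof (above_exchange n T k i j Hi ltac:(lia) Tj). lia.
    + apply exchange_maximizer; [lia|lia|apply Hsorted; lia|assumption..].
    + rewrite card_exchange; auto; lia.
Qed.

Theorem lemma7 (n : nat) (theta : nat -> R)
  (Hsorted : forall i j, (1 <= i)%nat -> (i <= j)%nat -> (j <= n)%nat -> theta j <= theta i)
  (Hnonneg : forall i, (1 <= i <= n)%nat -> 0 <= theta i)
  (S : nat -> bool) (k : nat)
  (HS : is_maximizer theta n S) (Hk : card n S = k) :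
  is_maximizer theta n (prefix k).
Proof.
  exact (prefix_maximizer_by_above theta n k Hsorted (card n (above k S)) S
           eq_refl HS Hk).
Qed.
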